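(* Let $\mathcal{D}=\{d_1,\dots,d_n\}$ (data) and $\mathcal{H}=\{h_1,\dots,h_m\}$ (hypotheses) be finite sets. Let $M=(M_{ij})$ be a non-negative $n\times m$ matrix with no zero row and no zero column, let $\mathbf{r}=(r_1,\dots,r_n)$ be a probability vector with all $r_i>0$ (the teacher's prior $P_{T_0}(d_i)=r_i$ on $\mathcal{D}$), and let $\mathbf{c}=(c_1,\dots,c_m)$ be a probability vector with all $c_j>0$ (the learner's prior $P_{L_0}(h_j)=c_j$ on $\mathcal{H}$); these priors are arbitrary. Define the $n\times m$ matrix $\widetilde{L}_0$ by $(\widetilde{L}_0)_{ij}= r_i\, M_{ij}/\sum_{k=1}^m M_{ik}$. Suppose that $(\mathbf{r},\mathbf{c})$-Sinkhorn scaling of $\widetilde{L}_0$ converges, and let $P$ be its limit. Then the conditional communication plans $$T^\star(d_i\mid h_j)=\frac{P_{ij}}{c_j},\qquad L^\star(h_j\mid d_i)=\frac{P_{ij}}{r_i}$$ solve the cooperative inference system, i.e. for all $i,j$, $$L^\star(h_j\mid d_i)=\frac{T^\star(d_i\mid h_j)\,c_j}{\sum_{k=1}^m T^\star(d_i\mid h_k)\,c_k},\qquad T^\star(d_i\mid h_j)=\frac{L^\star(h_j\mid d_i)\,r_i}{\sum_{k=1}^n L^\star(h_j\mid d_k)\,r_k}.$$ In particular, cooperative inference is a special case of entropy-regularized optimal transport with $\lambda=1$: when all entries of $M$ are positive, $P$ is the minimizer over $U(\mathbf{r},\mathbf{c})$ of $\langle C,P'\rangle-\mathrm{h}(P')$,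 where $C_{ij}=-\log\big(M_{ij}/\sum_{k}M_{ik}\big)-\log r_i$.
   Context: $(\mathbf{r},\mathbf{c})$-Sinkhorn scaling of a non-negative matrix $A$ is the iterated alternation of rescaling each row $i$ of $A$ so that its sum equals $r_i$ and rescaling each column $j$ so that its sum equals $c_j$. $U(\mathbf{r},\mathbf{c})$ denotes the set of non-negative $n\times m$ matrices with row sums $\mathbf{r}$ and column sums $\mathbf{c}$. For $P'\in U(\mathbf{r},\mathbf{c})$, $\langle C,P'\rangle=\sum_{i,j}C_{ij}P'_{ij}$ and $\mathrm{h}(P')=-\sum_{i,j}P'_{ij}\log P'_{ij}$ is the Shannon entropy. Entropy-regularized optimal transport with parameter $\lambda>0$ and cost $C$ seeks the minimizer over $U(\mathbf{r},\mathbf{c})$ of $\langle C,P'\rangle-\frac{1}{\lambda}\mathrm{h}(P')$. *)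

From HB Require Import structures.
From mathcomp Require Import all_boot all_order all_algebra.
From mathcomp Require Import all_classical all_reals all_analysis.
Set Implicit Arguments. Unset Strict Implicit. Unset Printing Implicit Defensive.
Import Order.TTheory GRing.Theory Num.Theory.
Import numFieldNormedType.Exports.
Local Open Scope ring_scope.
Local Open Scope classical_set_scope.

Section Defs.
Variable R : realType.
Variables n m : nat.

Definition row_scale (r : 'I_n -> R) (A : 'M[R]_(n, m)) : 'M[R]_(n, m) :=
  \matrix_(i, j) (A i j * r i / \sum_(k < m) A i k).

Definition col_scale (c : 'I_m -> R) (A : 'M[R]_(n, m)) : 'M[R]_(n, m) :=
  \matrix_(i, j) (A i j * c j / \sum_(k < n) A k j).

(* The (r,c)-Sinkhorn iterates: A_0 = A, A_{2k+1} = row_scale A_{2k},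
   A_{2k+2} = col_scale A_{2k+1}. *)
Fixpoint sinkhorn_seq (r : 'I_n -> R) (c : 'I_m -> R) (A : 'M[R]_(n, m))
  (k : nat) : 'M[R]_(n, m) :=
  match k with
  | 0 => A
  | k'.+1 => if odd k then row_scale r (sinkhorn_seq r c A k')
             else col_scale c (sinkhorn_seq r c A k')
  end.

Definition sinkhorn_converges_to (r : 'I_n -> R) (c : 'I_m -> R)
  (A P : 'M[R]_(n, m)) : Prop :=
  forall i j, (fun k => sinkhorn_seq r c A k i j) @ \oo --> P i j.

Definition is_prob_vec {k : nat} (v : 'I_k -> R) : Prop :=
  (forall i, 0 <= v i) /\ \sum_(i < k) v i = 1.

Definition transport_polytope (r : 'I_n -> R) (c : 'I_m -> R)
  (P : 'M[R]_(n, m)) : Prop :=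
  (forall i j, 0 <= P i j) /\
  (forall i, \sum_(j < m) P i j = r i) /\
  (forall j, \sum_(i < n) P i j = c j).

Definition frob (C P : 'M[R]_(n, m)) : R := \sum_(i < n) \sum_(j < m) C i j * P i j.

(* Shannon entropy h(P) = - sum P_ij log P_ij  (ln 0 = 0, so 0 log 0 = 0) *)
Definition shannon_entropy (P : 'M[R]_(n, m)) : R :=
  - \sum_(i < n) \sum_(j < m) P i j * ln (P i j).

Definition L0tilde (r : 'I_n -> R) (M : 'M[R]_(n, m)) : 'M[R]_(n, m) :=
  \matrix_(i, j) (r i * M i j / \sum_(k < m) M i k).

Definition coop_cost (r : 'I_n -> R) (M : 'M[R]_(n, m)) : 'M[R]_(n, m) :=
  \matrix_(i, j) (- ln (M i j / \sum_(k < m) M i k) - ln (r i)).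

End Defs.

(* Every Sinkhorn iterate of L~_0 is a diagonal scaling D1 M D2 of M with
   positive diagonals, so all iterates, and hence the limit P, have the cross
   ratios of M: P_ij P_i'j' M_ij' M_i'j = P_ij' P_i'j M_ij M_i'j'.  Odd iterates
   have row sums r and even ones column sums c, so P lies in U(r,c), which is
   all the cooperative-inference equations need.  When M > 0, every row and
   column of P has a positive entry, and the cross ratios then make P positive
   and itself a diagonal scaling of M; that is, C_ij + log P_ij = a_i + b_j.
   For such a P and any Q in U(r,c), the difference of the entropic costs of
   Q and P is the generalized Kullback-Leibler divergence of Q from P, which is
   nonnegative and vanishes only at Q = P. *)

From mathcomp Require Import all_boot all_order all_algebra.
From mathcomp Require Import all_classical all_reals all_analysis.
From mathcomp Require Import ring lra.
Set Implicit Arguments. Unset Strict Implicit. Unset Printing Implicit Defensive.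
Import Order.TTheory GRing.Theory Num.Theory.
Import numFieldNormedType.Exports.
Local Open Scope ring_scope.
Local Open Scope classical_set_scope.

Lemma psumr_gt0 (R : numDomainType) (I : finType) (F : I -> R) (j : I) :
  (forall i, 0 <= F i) -> 0 < F j -> 0 < \sum_i F i.
Proof.
move=> F_ge0 Fj_gt0; rewrite lt0r sumr_ge0 // andbT psumr_neq0 //.
by apply/hasP; exists j; rewrite ?mem_index_enum.
Qed.

Section RelativeEntropy.
Variable R : realType.

Definition kl_term (q p : R) := q * ln q - q * ln p - (q - p).

Lemma ln_lt_subr1 (t : R) : 0 < t -> t != 1 -> ln t < t - 1.
Proof.
move=> t_gt0 t_neq1; have lnt_neq0 : ln t != 0 by rewrite ln_eq0.
by have := expR_gt1Dx lnt_neq0; rewrite lnK ?posrE //; lra.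
Qed.

Lemma kl_termxx (p : R) : kl_term p p = 0.
Proof. by rewrite /kl_term !subrr. Qed.

Lemma kl_term_gt0 (q p : R) : 0 <= q -> 0 < p -> q != p -> 0 < kl_term q p.
Proof.
move=> q_ge0 p_gt0 q_neq_p; rewrite /kl_term.
have [->|q_neq0] := eqVneq q 0; first by rewrite !mul0r; lra.
have q_gt0 : 0 < q by rewrite lt0r q_neq0.
have pq_neq1 : p / q != 1 by apply: contraNneq q_neq_p => /divr1_eq ->.
have -> : q * ln q - q * ln p - (q - p) = q * (p / q - 1 - ln (p / q)).
  by rewrite ln_div ?posrE //; field.
by rewrite mulr_gt0 // subr_gt0 ln_lt_subr1 ?divr_gt0.
Qed.

Lemma kl_term_ge0 (q p : R) : 0 <= q -> 0 < p -> 0 <= kl_term q p.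
Proof.
move=> q_ge0 p_gt0; have [->|q_neq_p] := eqVneq q p; first by rewrite kl_termxx.
exact/ltW/kl_term_gt0.
Qed.

End RelativeEntropy.

Section EntropicTransport.
Variables (R : realType) (n m : nat) (r : 'I_n -> R) (c : 'I_m -> R).

Definition entropic_cost (C Q : 'M[R]_(n, m)) := frob C Q - shannon_entropy Q.

Lemma frob_separable (a : 'I_n -> R) (b : 'I_m -> R) (Q : 'M[R]_(n, m)) :
  transport_polytope r c Q ->
  \sum_i \sum_j (a i + b j) * Q i j = \sum_i a i * r i + \sum_j b j * c j.
Proof.
case=> _ [Q_row Q_col].
rewrite (eq_bigr (fun i => a i * \sum_j Q i j + \sum_j b j * Q i j)) => [|i _].
  rewrite big_split exchange_big /=; congr (_ + _).
    by apply: eq_bigr => i _; rewrite Q_row.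
  by apply: eq_bigr => j _; rewrite -mulr_sumr Q_col.
by rewrite mulr_sumr -big_split; apply: eq_bigr => j _; rewrite mulrDl.
Qed.

Variables (C P : 'M[R]_(n, m)) (a : 'I_n -> R) (b : 'I_m -> R).
Hypothesis P_gt0 : forall i j, 0 < P i j.
Hypothesis P_tp : transport_polytope r c P.
Hypothesis P_gibbs : forall i j, C i j + ln (P i j) = a i + b j.

Lemma entropic_cost_gibbs Q : transport_polytope r c Q ->
  entropic_cost C Q = \sum_i a i * r i + \sum_j b j * c j
    + \sum_i \sum_j (Q i j * ln (Q i j) - Q i j * ln (P i j)).
Proof.
move=> Q_tp; rewrite /entropic_cost /frob /shannon_entropy opprK.
rewrite -(@frob_separable a b Q Q_tp) -!big_split; apply: eq_bigr => i _ /=.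
rewrite -!big_split; apply: eq_bigr => j _ /=.
by rewrite -[C i j](addrK (ln (P i j))) P_gibbs; ring.
Qed.

Lemma entropic_cost_sub Q : transport_polytope r c Q ->
  entropic_cost C Q - entropic_cost C P = \sum_i \sum_j kl_term (Q i j) (P i j).
Proof.
move=> Q_tp; rewrite !entropic_cost_gibbs //.
have mass_eq : \sum_i \sum_j (Q i j - P i j) = 0.
  have [_ [Q_row _]] := Q_tp; have [_ [P_row _]] := P_tp.
  by rewrite big1 // => i _; rewrite sumrB Q_row P_row subrr.
have -> : \sum_i \sum_j kl_term (Q i j) (P i j) =
    \sum_i \sum_j (Q i j * ln (Q i j) - Q i j * ln (P i j)) -
    \sum_i \sum_j (Q i j - P i j).
  by rewrite -sumrB; apply: eq_bigr => i _; rewrite -sumrB.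
have -> : \sum_i \sum_j (P i j * ln (P i j) - P i j * ln (P i j)) = 0.
  by rewrite big1 // => i _; rewrite big1 // => j _; rewrite subrr.
by rewrite mass_eq subr0 addr0 addrC addKr.
Qed.

Lemma entropic_cost_argmin :
  (forall Q, transport_polytope r c Q -> entropic_cost C P <= entropic_cost C Q) /\
  (forall Q, transport_polytope r c Q ->
     entropic_cost C Q <= entropic_cost C P -> Q = P).
Proof.
have kl_ge0 Q : transport_polytope r c Q -> forall i j, 0 <= kl_term (Q i j) (P i j).
  by case=> Q_ge0 _ i j; apply: kl_term_ge0.
split=> Q Q_tp.
  rewrite -subr_ge0 entropic_cost_sub //.
  by apply: sumr_ge0 => i _; apply: sumr_ge0 => j _; apply: kl_ge0.
move=> QleP; apply/matrixP => i j; apply/eqP/contraT => QneP.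
have : 0 < entropic_cost C Q - entropic_cost C P.
  rewrite entropic_cost_sub //; apply: (@psumr_gt0 _ _ _ i) => [k|].
    by apply: sumr_ge0 => l _; apply: kl_ge0.
  apply: (@psumr_gt0 _ _ _ j) => [l|]; first exact: kl_ge0.
  by case: Q_tp => Q_ge0 _; apply: kl_term_gt0 (Q_ge0 i j) (P_gt0 i j) QneP.
by rewrite subr_gt0 ltNge QleP.
Qed.

End EntropicTransport.

Section DiagonalScaling.
Variables (R : realType) (n m : nat).

Lemma row_scale_row_sum (r : 'I_n -> R) (A : 'M[R]_(n, m)) i :
  \sum_j A i j != 0 -> \sum_j row_scale r A i j = r i.
Proof.
move=> Ai_neq0; under eq_bigr do rewrite mxE.
by rewrite -!mulr_suml mulrAC mulfV ?mul1r.
Qed.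

Lemma col_scale_col_sum (c : 'I_m -> R) (A : 'M[R]_(n, m)) j :
  \sum_i A i j != 0 -> \sum_i col_scale c A i j = c j.
Proof.
move=> Aj_neq0; under eq_bigr do rewrite mxE.
by rewrite -!mulr_suml mulrAC mulfV ?mul1r.
Qed.

Variable M : 'M[R]_(n, m).

Definition diag_scaling_of (A : 'M[R]_(n, m)) :=
  exists (x : 'I_n -> R) (y : 'I_m -> R),
  [/\ forall i, 0 < x i, forall j, 0 < y j & forall i j, A i j = x i * y j * M i j].

Definition same_cross_ratios (A : 'M[R]_(n, m)) := forall i i' j j',
  A i j * A i' j' * M i j' * M i' j = A i j' * A i' j * M i j * M i' j'.

Lemma diag_scaling_cross (A : 'M[R]_(n, m)) :
  diag_scaling_of A -> same_cross_ratios A.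
Proof. by case=> x [y [_ _ eA]] i i' j j'; rewrite !eA; ring. Qed.

Lemma diag_scaling_of_cross (A : 'M[R]_(n, m)) :
  (forall i j, 0 < M i j) -> (forall i j, 0 < A i j) ->
  same_cross_ratios A -> diag_scaling_of A.
Proof.
move=> M_gt0 A_gt0 A_cross.
case: (pickP (@predT 'I_n)) => [i0 _|no_row]; last first.
  by exists (fun=> 1), (fun=> 1); split=> // i; have := no_row i.
case: (pickP (@predT 'I_m)) => [j0 _|no_col]; last first.
  by exists (fun=> 1), (fun=> 1); split=> // i j; have := no_col j.
exists (fun i => A i j0 / M i j0), (fun j => A i0 j / M i0 j * (M i0 j0 / A i0 j0)).
split=> [i|j|i j]; first exact: divr_gt0.
  by rewrite mulr_gt0 ?divr_gt0.
have Mij0_neq0 := lt0r_neq0 (M_gt0 i j0); have Mi0j_neq0 := lt0r_neq0 (M_gt0 i0 j).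
have Ai0j0_neq0 := lt0r_neq0 (A_gt0 i0 j0).
apply: (mulIf (mulf_neq0 (mulf_neq0 Ai0j0_neq0 Mij0_neq0) Mi0j_neq0)).
by rewrite !mulrA A_cross; field; rewrite Mij0_neq0 Mi0j_neq0 Ai0j0_neq0.
Qed.

Hypothesis M_ge0 : forall i j, 0 <= M i j.
Hypothesis M_row : forall i, exists j, M i j != 0.
Hypothesis M_col : forall j, exists i, M i j != 0.

Lemma diag_scaling_ge0 (A : 'M[R]_(n, m)) i j : diag_scaling_of A -> 0 <= A i j.
Proof.
by case=> x [y [x_gt0 y_gt0 ->]]; rewrite !mulr_ge0 ?(ltW (x_gt0 i)) ?(ltW (y_gt0 j)).
Qed.

Lemma diag_scaling_row_sum_gt0 (A : 'M[R]_(n, m)) i :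
  diag_scaling_of A -> 0 < \sum_j A i j.
Proof.
move=> A_scal; have [j Mij_neq0] := M_row i.
apply: (@psumr_gt0 _ _ _ j) => [k|]; first exact: diag_scaling_ge0.
case: A_scal => x [y [x_gt0 y_gt0 ->]].
by rewrite !mulr_gt0 // lt0r Mij_neq0 M_ge0.
Qed.

Lemma diag_scaling_col_sum_gt0 (A : 'M[R]_(n, m)) j :
  diag_scaling_of A -> 0 < \sum_i A i j.
Proof.
move=> A_scal; have [i Mij_neq0] := M_col j.
apply: (@psumr_gt0 _ _ _ i) => [k|]; first exact: diag_scaling_ge0.
case: A_scal => x [y [x_gt0 y_gt0 ->]].
by rewrite !mulr_gt0 // lt0r Mij_neq0 M_ge0.
Qed.

Lemma row_scale_diag_scaling (r : 'I_n -> R) (A : 'M[R]_(n, m)) :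
  (forall i, 0 < r i) -> diag_scaling_of A -> diag_scaling_of (row_scale r A).
Proof.
move=> r_gt0 A_scal; have S_gt0 i := diag_scaling_row_sum_gt0 i A_scal.
case: A_scal => x [y [x_gt0 y_gt0 eA]].
exists (fun i => x i * r i / \sum_j A i j), y; split=> // [i|i j].
  by rewrite divr_gt0 ?mulr_gt0.
by rewrite mxE {1}eA; ring.
Qed.

Lemma col_scale_diag_scaling (c : 'I_m -> R) (A : 'M[R]_(n, m)) :
  (forall j, 0 < c j) -> diag_scaling_of A -> diag_scaling_of (col_scale c A).
Proof.
move=> c_gt0 A_scal; have S_gt0 j := diag_scaling_col_sum_gt0 j A_scal.
case: A_scal => x [y [x_gt0 y_gt0 eA]].
exists x, (fun j => y j * c j / \sum_i A i j); split=> // [j|i j].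
  by rewrite divr_gt0 ?mulr_gt0.
by rewrite mxE {1}eA; ring.
Qed.

End DiagonalScaling.

Lemma cvg_subseq_cst (R : realType) (u : R^nat) (g : nat -> nat) (l a : R) :
  u @ \oo --> l -> (forall p, p <= g p)%N -> (forall p, u (g p) = a) -> l = a.
Proof.
move=> u_l g_ge ug_a.
have g_oo : g @ \oo --> \oo.
  by move=> S [N _ SN]; exists N => // p /= Np; apply/SN/(leq_trans Np).
have := cvg_comp _ _ g_oo u_l; rewrite (eq_cvg _ _ ug_a) => a_l.
exact: cvg_unique a_l (cvg_cst a).
Qed.

Lemma cvg_same_cross_ratios (R : realType) (n m : nat) (M : 'M[R]_(n, m))
    (A : nat -> 'M[R]_(n, m)) (P : 'M[R]_(n, m)) :
  (forall k, same_cross_ratios M (A k)) ->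
  (forall i j, (fun k => A k i j) @ \oo --> P i j) -> same_cross_ratios M P.
Proof.
move=> A_cross A_cvg i i' j j'.
have cross_cvg i1 i2 j1 j2 :
    (fun k => A k i1 j1 * A k i2 j2 * M i1 j2 * M i2 j1) @ \oo -->
    P i1 j1 * P i2 j2 * M i1 j2 * M i2 j1.
  exact: cvgM (cvgM (cvgM (A_cvg i1 j1) (A_cvg i2 j2)) (cvg_cst _)) (cvg_cst _).
have := cross_cvg i i' j' j; rewrite -(eq_cvg _ _ (fun k => A_cross k i i' j j')).
exact: cvg_unique (cross_cvg i i' j j').
Qed.

Section Sinkhorn.
Variables (R : realType) (n m : nat) (M : 'M[R]_(n, m)).
Variables (r : 'I_n -> R) (c : 'I_m -> R).
Hypothesis M_ge0 : forall i j, 0 <= M i j.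
Hypothesis M_row : forall i, exists j, M i j != 0.
Hypothesis M_col : forall j, exists i, M i j != 0.
Hypothesis r_gt0 : forall i, 0 < r i.
Hypothesis c_gt0 : forall j, 0 < c j.

Local Notation A := (sinkhorn_seq r c (L0tilde r M)).

Lemma sinkhorn_seqS k :
  A k.+1 = if odd k.+1 then row_scale r (A k) else col_scale c (A k).
Proof. by []. Qed.

Lemma L0tilde_diag_scaling : diag_scaling_of M (L0tilde r M).
Proof.
have M_scal : diag_scaling_of M M.
  by exists (fun=> 1), (fun=> 1); split=> // i j; rewrite !mul1r.
exists (fun i => r i / \sum_k M i k), (fun=> 1); split=> // [i|i j].
  by rewrite divr_gt0 // (diag_scaling_row_sum_gt0 M_ge0 M_row _ M_scal).
by rewrite mxE mulr1 mulrAC.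
Qed.

Lemma sinkhorn_seq_diag_scaling k : diag_scaling_of M (A k).
Proof.
elim: k => [|k IHk]; first exact: L0tilde_diag_scaling.
rewrite sinkhorn_seqS; case: ifP => _.
  exact: row_scale_diag_scaling.
exact: col_scale_diag_scaling.
Qed.

Lemma sinkhorn_seq_odd p : A p.*2.+1 = row_scale r (A p.*2).
Proof. by rewrite sinkhorn_seqS oddS odd_double. Qed.

Lemma sinkhorn_seq_even p : A p.*2.+2 = col_scale c (A p.*2.+1).
Proof. by rewrite sinkhorn_seqS !oddS negbK odd_double. Qed.

Lemma sinkhorn_seq_row_sum p i : \sum_j A p.*2.+1 i j = r i.
Proof.
rewrite sinkhorn_seq_odd row_scale_row_sum //.
exact/lt0r_neq0/(diag_scaling_row_sum_gt0 M_ge0 M_row _ (sinkhorn_seq_diag_scaling _)).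
Qed.

Lemma sinkhorn_seq_col_sum p j : \sum_i A p.*2.+2 i j = c j.
Proof.
rewrite sinkhorn_seq_even col_scale_col_sum //.
exact/lt0r_neq0/(diag_scaling_col_sum_gt0 M_ge0 M_col _ (sinkhorn_seq_diag_scaling _)).
Qed.

Lemma sinkhorn_limit_transport P :
  sinkhorn_converges_to r c (L0tilde r M) P -> transport_polytope r c P.
Proof.
move=> A_cvg.
have sum_cvg (I : finType) (F : nat -> I -> R) (G : I -> R) :
    (forall x, F ^~ x @ \oo --> G x) -> (fun k => \sum_x F k x) @ \oo --> \sum_x G x.
  by move=> FG; apply: cvg_big => //; exact: add_continuous.
split; [|split].
- move=> i j; apply: cvgr_to_ge (A_cvg i j) _; apply: nearW => k.
  exact: diag_scaling_ge0 (sinkhorn_seq_diag_scaling k).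
- move=> i; apply: (cvg_subseq_cst (sum_cvg _ _ _ (A_cvg i))) (sinkhorn_seq_row_sum ^~ i).
  by move=> p; apply/leqW; rewrite -addnn leq_addr.
- move=> j; apply: (cvg_subseq_cst (sum_cvg _ _ _ (A_cvg ^~ j))) (sinkhorn_seq_col_sum ^~ j).
  by move=> p; do 2!apply/leqW; rewrite -addnn leq_addr.
Qed.

Lemma sinkhorn_limit_same_cross_ratios P :
  sinkhorn_converges_to r c (L0tilde r M) P -> same_cross_ratios M P.
Proof.
apply: cvg_same_cross_ratios => k.
exact/diag_scaling_cross/sinkhorn_seq_diag_scaling.
Qed.

End Sinkhorn.

Section CooperativeInference.
Variables (R : realType) (n m : nat) (r : 'I_n -> R) (c : 'I_m -> R).
Hypothesis r_gt0 : forall i, 0 < r i.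
Hypothesis c_gt0 : forall j, 0 < c j.

Lemma transport_plans_cooperative (P : 'M[R]_(n, m)) :
  transport_polytope r c P -> forall i j,
      P i j / r i =
        (P i j / c j * c j) / (\sum_(k < m) P i k / c k * c k)
   /\ P i j / c j =
        (P i j / r i * r i) / (\sum_(k < n) P k j / r k * r k).
Proof.
case=> _ [P_row P_col] i j.
have r_neq0 k := lt0r_neq0 (r_gt0 k); have c_neq0 k := lt0r_neq0 (c_gt0 k).
under eq_bigr do rewrite divfK //; under [X in _ /\ _ = _ / X]eq_bigr do rewrite divfK //.
by rewrite !divfK // P_row P_col.
Qed.

Variable M : 'M[R]_(n, m).
Hypothesis M_gt0 : forall i j, 0 < M i j.

Lemma transport_same_cross_ratios_gt0 (P : 'M[R]_(n, m)) :
  transport_polytope r c P -> same_cross_ratios M P -> forall i j, 0 < P i j.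
Proof.
case=> P_ge0 [P_row P_col] P_cross i j.
have [l /andP[_ Pil_gt0]] : exists l, true && (0 < P i l).
  by apply: psumr_neq0P => [l _|]; [exact: P_ge0 | rewrite P_row; exact/eqP/lt0r_neq0].
have [k /andP[_ Pkj_gt0]] : exists k, true && (0 < P k j).
  by apply: psumr_neq0P => [k _|]; [exact: P_ge0 | rewrite P_col; exact/eqP/lt0r_neq0].
rewrite lt0r P_ge0 andbT; apply: contra_eq_neq (P_cross i k j l) => ->.
by rewrite !mul0r eq_sym lt0r_neq0 // !mulr_gt0.
Qed.

Lemma coop_cost_gibbs (P : 'M[R]_(n, m)) : diag_scaling_of M P ->
  exists (a : 'I_n -> R) (b : 'I_m -> R),
    forall i j, coop_cost r M i j + ln (P i j) = a i + b j.
Proof.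
case=> x [y [x_gt0 y_gt0 eP]].
exists (fun i => ln (\sum_k M i k) - ln (r i) + ln (x i)), (fun j => ln (y j)) => i j.
have S_gt0 : 0 < \sum_k M i k by apply: (@psumr_gt0 _ _ _ j) => [k|]; [exact: ltW | exact: M_gt0].
rewrite mxE eP ln_div ?lnM ?posrE ?mulr_gt0 //; lra.
Qed.

End CooperativeInference.

Theorem proposition3 (R : realType) (n m : nat) (M : 'M[R]_(n, m))
  (r : 'I_n -> R) (c : 'I_m -> R) (P : 'M[R]_(n, m)) :
  (forall i j, 0 <= M i j) ->
  (forall i, exists j, M i j != 0) ->
  (forall j, exists i, M i j != 0) ->
  is_prob_vec r -> (forall i, 0 < r i) ->
  is_prob_vec c -> (forall j, 0 < c j) ->
  sinkhorn_converges_to r c (L0tilde r M) P ->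
  (forall i j,
      P i j / r i =
        (P i j / c j * c j) / (\sum_(k < m) P i k / c k * c k)
   /\ P i j / c j =
        (P i j / r i * r i) / (\sum_(k < n) P k j / r k * r k))
  /\
  ((forall i j, 0 < M i j) ->
     transport_polytope r c P /\
     (forall P', transport_polytope r c P' ->
        frob (coop_cost r M) P - shannon_entropy P
          <= frob (coop_cost r M) P' - shannon_entropy P') /\
     (forall P', transport_polytope r c P' ->
        frob (coop_cost r M) P' - shannon_entropy P'
          <= frob (coop_cost r M) P - shannon_entropy P -> P' = P)).
Proof.
(* The priors need not be normalized. *)
move=> M_ge0 M_row M_col _ r_gt0 _ c_gt0 A_cvg.
have P_tp := sinkhorn_limit_transport M_ge0 M_row M_col r_gt0 c_gt0 A_cvg.
split=> [|M_gt0]; first exact: transport_plans_cooperative.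
have P_cross := sinkhorn_limit_same_cross_ratios M_ge0 M_row M_col r_gt0 c_gt0 A_cvg.
have P_gt0 := transport_same_cross_ratios_gt0 r_gt0 c_gt0 M_gt0 P_tp P_cross.
have P_scal := diag_scaling_of_cross M_gt0 P_gt0 P_cross.
have [a [b P_gibbs]] := coop_cost_gibbs r M_gt0 P_scal.
by have [] := entropic_cost_argmin P_gt0 P_tp P_gibbs.
Qed.
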